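(* Let $p\in[1,\infty]$, $\boldsymbol{w}\in\mathbb{R}^d\setminus\{\boldsymbol{0}\}$, $b\in\mathbb{R}$, $C(\boldsymbol{x})=\mathbf{1}\{\boldsymbol{w}\cdot\boldsymbol{x}+b>0\}$, let $\boldsymbol{\mu}_0\in\mathbb{R}^d$ be a unit vector (Euclidean norm), $\varepsilon>0$, $\delta\ge0$. Let $D_{\varepsilon,\delta|p}=\{\boldsymbol{v}\in\mathbb{R}^d:\|\boldsymbol{v}\|_p\le\varepsilon,\ |\boldsymbol{v}\cdot\boldsymbol{\mu}_0|\le\delta\}$ and let $\boldsymbol{u}_p$ be a maximizer of $|\boldsymbol{w}\cdot\boldsymbol{v}|$ over $\boldsymbol{v}\in D_{\varepsilon,\delta|p}$. Then $$\Omega_{\varepsilon,\delta|p}=\Omega(\boldsymbol{u}_p)\cup\Omega(-\boldsymbol{u}_p),$$ where $\Omega_{\varepsilon,\delta|p}$ is the set of $\boldsymbol{x}\in\mathbb{R}^d$ for which there is $\boldsymbol{x}'$ with $\|\boldsymbol{x}-\boldsymbol{x}'\|_p\le\varepsilon$, $|(\boldsymbol{x}-\boldsymbol{x}')\cdot\boldsymbol{\mu}_0|\le\delta$ and $C(\boldsymbol{x}')\ne C(\boldsymbol{x})$.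
   Context: For $\boldsymbol{v}\in\mathbb{R}^d$, $\Omega(\boldsymbol{v})=\{\boldsymbol{x}\in\mathbb{R}^d:C(\boldsymbol{x}+\boldsymbol{v})\ne C(\boldsymbol{x})\}$. *)

From HB Require Import structures.
From mathcomp Require Import all_boot all_order all_algebra.
From mathcomp Require Import all_classical all_reals all_analysis.
Set Implicit Arguments. Unset Strict Implicit. Unset Printing Implicit Defensive.
Import Order.TTheory GRing.Theory Num.Theory.
Local Open Scope ring_scope.
Local Open Scope classical_set_scope.

Definition dotp (R : realType) (d : nat) (u v : 'rV[R]_d) : R :=
  \sum_(i < d) u 0 i * v 0 i.

(* l^p norm for p in the extended reals: finite p uses (sum |v_i|^p)^(1/p),
   p = +oo uses max_i |v_i|.  (p = -oo is excluded by hypothesis 1 <= p.) *)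
Definition pnorm (R : realType) (d : nat) (p : \bar R) (v : 'rV[R]_d) : R :=
  match p with
  | EFin r => (\sum_(i < d) `|v 0 i| `^ r) `^ r^-1
  | +oo%E => \big[Num.max/0]_(i < d) `|v 0 i|
  | -oo%E => 0
  end.

Definition linC (R : realType) (d : nat) (w : 'rV[R]_d) (b : R) (x : 'rV[R]_d) : bool :=
  0 < dotp w x + b.

Definition Omega (R : realType) (d : nat) (C : 'rV[R]_d -> bool) (v : 'rV[R]_d)
  : set 'rV[R]_d := [set x | C (x + v) != C x].

Definition Dset (R : realType) (d : nat) (p : \bar R) (eps delta : R) (mu0 : 'rV[R]_d)
  : set 'rV[R]_d := [set v | pnorm p v <= eps /\ `|dotp v mu0| <= delta].

Definition OmegaD (R : realType) (d : nat) (C : 'rV[R]_d -> bool) (p : \bar R)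
  (eps delta : R) (mu0 : 'rV[R]_d) : set 'rV[R]_d :=
  [set x | exists x', pnorm p (x - x') <= eps /\ `|dotp (x - x') mu0| <= delta
                      /\ C x' != C x].

(** The admissible set [D] is symmetric under [v |-> -v], hence
    [Omega_{eps,delta|p}] is the union of the [Omega(v)] for [v] in [D].  For
    the linear classifier, [x + v] changes class iff [w.x + b] and
    [w.x + b + w.v] lie on different sides of [0]; as [|w.v| <= |w.u|] for
    [v] in [D], the latter lies between [w.x + b - |w.u|] and [w.x + b + |w.u|],
    so one of [u], [-u] changes the class of [x] as well. *)
From HB Require Import structures.
From mathcomp Require Import all_boot all_order all_algebra.
From mathcomp Require Import all_classical all_reals all_analysis.
From mathcomp Require Import lra.

Set Implicit Arguments.
Unset Strict Implicit.
Unset Printing Implicit Defensive.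
Import Order.TTheory GRing.Theory Num.Theory.
Local Open Scope ring_scope.
Local Open Scope classical_set_scope.

Section DotProduct.
Variables (R : realType) (d : nat).
Implicit Types u v w : 'rV[R]_d.

Lemma dotpNl u v : dotp (- u) v = - dotp u v.
Proof. by rewrite /dotp -sumrN; apply: eq_bigr => i _; rewrite mxE mulNr. Qed.

Lemma dotpNr u v : dotp u (- v) = - dotp u v.
Proof. by rewrite /dotp -sumrN; apply: eq_bigr => i _; rewrite mxE mulrN. Qed.

Lemma dotpDr w u v : dotp w (u + v) = dotp w u + dotp w v.
Proof. by rewrite /dotp -big_split; apply: eq_bigr => i _; rewrite mxE mulrDr. Qed.

End DotProduct.

Lemma pnormN (R : realType) (d : nat) (p : \bar R) (v : 'rV[R]_d) :
  pnorm p (- v) = pnorm p v.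
Proof.
rewrite /pnorm; case: p => [r| | //].
  by congr (_ `^ _); apply: eq_bigr => i _; rewrite mxE normrN.
by apply: eq_bigr => i _; rewrite mxE normrN.
Qed.

Lemma DsetN (R : realType) (d : nat) (p : \bar R) (eps delta : R) (mu0 v : 'rV[R]_d) :
  Dset p eps delta mu0 (- v) = Dset p eps delta mu0 v.
Proof. by rewrite /Dset /= pnormN dotpNl normrN. Qed.

Lemma OmegaD_bigcup (R : realType) (d : nat) (C : 'rV[R]_d -> bool) (p : \bar R)
    (eps delta : R) (mu0 : 'rV[R]_d) :
  OmegaD C p eps delta mu0 = \bigcup_(v in Dset p eps delta mu0) Omega C v.
Proof.
apply/seteqP; split => x /=.
- move=> [x' [norm_xx' [mu0_xx' Cx']]]; exists (x' - x); last by rewrite /Omega /= addrC subrK.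
  by rewrite -DsetN opprB.
- move=> [v vD Cxv]; exists (x + v).
  have [vp vmu] : Dset p eps delta mu0 (- v) by rewrite DsetN.
  by rewrite opprD addrA subrr add0r; exact: (conj vp (conj vmu Cxv)).
Qed.

Lemma linC_addr (R : realType) (d : nat) (w : 'rV[R]_d) (b : R) (x v : 'rV[R]_d) :
  linC w b (x + v) = (0 < (dotp w x + b) + dotp w v).
Proof. by rewrite /linC dotpDr addrAC. Qed.

Lemma sign_change_bracket (R : realDomainType) (s t a : R) :
  `|t| <= `|a| -> (0 < s + t) != (0 < s) ->
  ((0 < s + a) != (0 < s)) || ((0 < s - a) != (0 < s)).
Proof.
wlog a_ge0 : a / 0 <= a.
  move=> hwlog; have [/hwlog//|a_lt0] := lerP 0 a.
  by have := hwlog (- a); rewrite normrN opprK orbC; apply; rewrite oppr_ge0 ltW.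
rewrite (ger0_norm a_ge0) ler_norml => /andP[tl tr].
have [_|_] := ltrP 0 s.
  by rewrite !eqb_id -!leNgt => st; apply/orP; right; lra.
by rewrite !eqbF_neg !negbK => st; apply/orP; left; lra.
Qed.

Lemma Omega_linC_sub (R : realType) (d : nat) (w : 'rV[R]_d) (b : R) (u v : 'rV[R]_d) :
  `|dotp w v| <= `|dotp w u| ->
  Omega (linC w b) v `<=` Omega (linC w b) u `|` Omega (linC w b) (- u).
Proof.
move=> wvu x; rewrite /Omega /= !linC_addr dotpNr.
by move=> /(sign_change_bracket wvu)/orP.
Qed.

Theorem lemma5 (R : realType) (d : nat) (p : \bar R) (w : 'rV[R]_d) (b : R)
  (mu0 : 'rV[R]_d) (eps delta : R) (u : 'rV[R]_d) :
  (1 <= p)%E -> w != 0 -> Num.sqrt (dotp mu0 mu0) = 1 ->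
  0 < eps -> 0 <= delta ->
  u \in Dset p eps delta mu0 ->
  (forall v, v \in Dset p eps delta mu0 -> `|dotp w v| <= `|dotp w u|) ->
  OmegaD (linC w b) p eps delta mu0 =
    Omega (linC w b) u `|` Omega (linC w b) (- u).
Proof.
move=> _ _ _ _ _; rewrite inE => uD umax.
rewrite OmegaD_bigcup; apply/seteqP; split.
- by apply: bigcup_sub => v vD; apply: Omega_linC_sub; apply: umax; rewrite inE.
- have NuD : Dset p eps delta mu0 (- u) by rewrite DsetN.
  by move=> x [Cxu | CxNu]; [exists u | exists (- u)].
Qed.
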